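(* Let $n\geq 1$ with $n\neq 5$, and let $G$ be an $n$-vertex planar graph containing no subgraph isomorphic to $S_{2,2}$. Then $e(G)\leq 2n-2$.
   Context: All graphs are finite and simple; $e(G)$ denotes the number of edges of $G$. The double star $S_{2,2}$ is the tree obtained from an edge $xy$ by joining $x$ to two new vertices and $y$ to two further new vertices (6 vertices in total). *)

From Stdlib Require Import Reals.
From mathcomp Require Import all_boot.
Set Implicit Arguments. Unset Strict Implicit. Unset Printing Implicit Defensive.

Definition simple_graph (T : finType) (e : rel T) : Prop :=
  symmetric e /\ irreflexive e.

Definition edge_set (T : finType) (e : rel T) : {set {set T}} :=
  [set [set x; y] | x in T, y in T & e x y].

Definition num_edges (T : finType) (e : rel T) : nat := #|edge_set e|.

(* G contains a (not necessarily induced) subgraph isomorphic to S_{2,2}: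
   distinct vertices x,y,a,b,c,d with x~y, x~a, x~b, y~c, y~d. *)
Definition has_S22 (T : finType) (e : rel T) : Prop :=
  exists x y a b c d : T,
    uniq [:: x; y; a; b; c; d] /\
    e x y /\ e x a /\ e x b /\ e y c /\ e y d.

Definition cont01 (f : R -> R) : Prop :=
  forall t : R, (Rle 0 t /\ Rle t 1) ->
  forall eps : R, (Rlt 0 eps) -> exists delta : R, (Rlt 0 delta) /\
    forall s : R, (Rle 0 s /\ Rle s 1) -> (Rlt (Rabs (Rminus s t)) delta) ->
      (Rlt (Rabs (Rminus (f s) (f t))) eps).

Definition curve_cont (g : R -> R * R) : Prop :=
  cont01 (fun t => fst (g t)) /\ cont01 (fun t => snd (g t)).

(* Planarity: a drawing in the plane R^2 where vertices are distinct points,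
   each edge xy is a Jordan arc (continuous, injective on [0,1]) from the
   point of x to the point of y whose interior avoids all vertex points, and
   interiors of arcs of distinct edges are disjoint.  (An arc is given for
   each ordered adjacent pair; arcs for the same unordered edge are not
   constrained against each other.) *)
Definition planar (T : finType) (e : rel T) : Prop :=
  exists (pos : T -> R * R) (arc : T -> T -> R -> R * R),
    injective pos /\
    (forall x y, e x y ->
       curve_cont (arc x y) /\
       arc x y R0 = pos x /\ arc x y R1 = pos y /\
       (forall s t : R, (Rle 0 s /\ Rle s 1) -> (Rle 0 t /\ Rle t 1) ->
          arc x y s = arc x y t -> s = t) /\
       (forall (t : R) (z : T), (Rlt 0 t /\ Rlt t 1) -> arc x y t <> pos z)) /\
    (forall x y x' y', e x y -> e x' y' -> [set x; y] != [set x'; y'] ->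
       forall s t : R, (Rlt 0 s /\ Rlt s 1) -> (Rlt 0 t /\ Rlt t 1) ->
         arc x y s <> arc x' y' t).

(* Planar graphs contain no K5.  For two disjoint arcs [sg] and [tau], the
   quadrant of [sg s - tau t] never jumps to the opposite quadrant between
   neighbouring points of a fine grid of sample times, so a discrete Stokes
   argument shows that the quarter turns of [sg] around [tau 0] minus those
   around [tau 1] equal the same quantity with [sg] and [tau] exchanged.  The
   quarter turns of an arc around a point are also determined modulo 4 by the
   quadrants of its endpoints, and for the ten arcs of a drawn K5 the two
   kinds of relations have no common integer solution (the van Kampen
   obstruction).

   The edge bound is proved for every vertex set [S] in the form
   [2 + e(S) <= 2 |S| + [|S| = 5]], by induction on [|S|]: sets of at most five
   vertices are counted directly; a vertex of degree at most 2 is deleted (on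
   six vertices, nine edges among the other five plus a pendant edge would
   form an S_{2,2}); degree 5 or more is impossible next to a vertex of degree
   at least 3; a vertex of degree 4 spans with its neighbours a component on
   five vertices with at most nine edges; and a cubic graph has 3|S|/2 edges. *)

From Stdlib Require Import Reals Lra Lia ZArith ClassicalEpsilon.
From mathcomp Require Import all_boot zify.

Set Implicit Arguments. Unset Strict Implicit. Unset Printing Implicit Defensive.

Local Open Scope R_scope.

(* [cont01] only constrains a function on [0, 1]; precomposing with [clamp01]
   gives a function continuous on all of [R], to which Stdlib's Heine and
   extreme value theorems apply. *)
Definition clamp01 (x : R) : R := Rmax 0 (Rmin 1 x).

Lemma clamp01_in x : 0 <= clamp01 x <= 1.
Proof. unfold clamp01, Rmax, Rmin; repeat destruct Rle_dec; lra. Qed.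

Lemma clamp01_id x : 0 <= x <= 1 -> clamp01 x = x.
Proof. intros; unfold clamp01, Rmax, Rmin; repeat destruct Rle_dec; lra. Qed.

Lemma clamp01_contract x y : 0 <= x <= 1 -> Rabs (clamp01 y - x) <= Rabs (y - x).
Proof.
  intros; unfold clamp01, Rmax, Rmin; repeat destruct Rle_dec;
  unfold Rabs; repeat destruct Rcase_abs; lra.
Qed.

Lemma cont01_continuity_pt f x :
  cont01 f -> 0 <= x <= 1 -> continuity_pt (fun y => f (clamp01 y)) x.
Proof.
  intros Hf Hx eps Heps.
  destruct (Hf x Hx eps Heps) as [d [Hd Hfd]].
  exists d; split; [exact Hd|]; intros y [_ Hy]; simpl in *; unfold R_dist in *.
  rewrite (clamp01_id Hx); apply Hfd; [apply clamp01_in|].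
  eapply Rle_lt_trans; [apply clamp01_contract|]; eauto.
Qed.

Lemma cont01_unif f : cont01 f -> forall eps, 0 < eps -> exists d, 0 < d /\
  forall s t, 0 <= s <= 1 -> 0 <= t <= 1 -> Rabs (s - t) < d -> Rabs (f s - f t) < eps.
Proof.
  intros Hf eps Heps.
  destruct (Heine _ _ (compact_P3 0 1) (fun x Hx => cont01_continuity_pt Hf Hx)
              (mkposreal eps Heps)) as [d Hd].
  exists d; split; [apply cond_pos|]; intros s t Hs Ht Hst.
  specialize (Hd s t Hs Ht Hst); simpl in Hd; rewrite !clamp01_id in Hd; auto.
Qed.

Lemma cont01_min f : cont01 f -> exists x, 0 <= x <= 1 /\ forall y, 0 <= y <= 1 -> f x <= f y.
Proof.
  intros Hf.
  destruct (continuity_ab_min (fun y => f (clamp01 y)) 0 1 ltac:(lra)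
              (fun c Hc => cont01_continuity_pt Hf Hc)) as [x [Hmin Hx]].
  exists x; split; [exact Hx|]; intros y Hy.
  specialize (Hmin y Hy); rewrite !clamp01_id in Hmin; auto.
Qed.

Lemma cont01_dominated f g1 g2 : cont01 g1 -> cont01 g2 ->
  (forall x y, 0 <= x <= 1 -> 0 <= y <= 1 ->
     Rabs (f x - f y) <= Rabs (g1 x - g1 y) + Rabs (g2 x - g2 y)) -> cont01 f.
Proof.
  intros H1 H2 Hdom t Ht eps Heps.
  destruct (H1 t Ht (eps / 2) ltac:(lra)) as [d1 [Hd1 Hg1]].
  destruct (H2 t Ht (eps / 2) ltac:(lra)) as [d2 [Hd2 Hg2]].
  exists (Rmin d1 d2); split; [apply Rmin_pos; auto|]; intros s Hs Hst.
  specialize (Hg1 s Hs (Rlt_le_trans _ _ _ Hst (Rmin_l _ _))).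
  specialize (Hg2 s Hs (Rlt_le_trans _ _ _ Hst (Rmin_r _ _))).
  specialize (Hdom s t Hs Ht); lra.
Qed.

Definition vsub (u v : R * R) : R * R := (fst u - fst v, snd u - snd v).
Definition norm1 (u : R * R) : R := Rabs (fst u) + Rabs (snd u).
Definition dist1 (u v : R * R) : R := norm1 (vsub u v).

Lemma dist1_ge0 u v : 0 <= dist1 u v.
Proof.
  unfold dist1, norm1; pose proof (Rabs_pos (fst (vsub u v))).
  pose proof (Rabs_pos (snd (vsub u v))); lra.
Qed.

Lemma dist1_eq0 u v : dist1 u v = 0 -> u = v.
Proof.
  destruct u as [a b], v as [c d]; unfold dist1, norm1, vsub; simpl; intros H.
  pose proof (Rabs_pos (a - c)); pose proof (Rabs_pos (b - d)).
  revert H; unfold Rabs; repeat destruct Rcase_abs; intros; f_equal; lra.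
Qed.

Lemma dist1_sym u v : dist1 u v = dist1 v u.
Proof.
  unfold dist1, norm1, vsub; simpl.
  rewrite (Rabs_minus_sym (fst u)) (Rabs_minus_sym (snd u)); reflexivity.
Qed.

Lemma dist1_triangle u v w : dist1 u w <= dist1 u v + dist1 v w.
Proof.
  destruct u as [a b], v as [c d], w as [x y]; unfold dist1, norm1, vsub; simpl.
  pose proof (Rabs_triang (a - c) (c - x)); pose proof (Rabs_triang (b - d) (d - y)).
  replace (a - c + (c - x)) with (a - x) in * by ring.
  replace (b - d + (d - y)) with (b - y) in * by ring.
  lra.
Qed.

Lemma curve_dist1_cont g p : curve_cont g -> cont01 (fun t => dist1 p (g t)).
Proof.
  intros [G1 G2]; apply (cont01_dominated G1 G2); intros x y _ _.
  change (Rabs (dist1 p (g x) - dist1 p (g y)) <= dist1 (g x) (g y)).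
  have := dist1_triangle p (g x) (g y); have := dist1_triangle p (g y) (g x).
  rewrite (dist1_sym (g y)); intros; apply: Rabs_le; lra.
Qed.

Lemma curve_unif g : curve_cont g -> forall eps, 0 < eps -> exists d, 0 < d /\
  forall s t, 0 <= s <= 1 -> 0 <= t <= 1 -> Rabs (s - t) < d -> dist1 (g s) (g t) < eps.
Proof.
  intros [G1 G2] eps Heps.
  destruct (cont01_unif G1 (eps := eps / 2) ltac:(lra)) as [d1 [Hd1 U1]].
  destruct (cont01_unif G2 (eps := eps / 2) ltac:(lra)) as [d2 [Hd2 U2]].
  exists (Rmin d1 d2); split; [apply Rmin_pos; auto|]; intros s t Hs Ht Hst.
  specialize (U1 s t Hs Ht (Rlt_le_trans _ _ _ Hst (Rmin_l _ _))).
  specialize (U2 s t Hs Ht (Rlt_le_trans _ _ _ Hst (Rmin_r _ _))).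
  unfold dist1, norm1, vsub; simpl; lra.
Qed.

(* The index of the half-open quadrant containing [u]: quadrant [k] is the
   image of [{x > 0, y >= 0}] under the rotation by [k] right angles; the
   origin gets index 3. *)
Definition quadrant (u : R * R) : Z :=
  match Rlt_dec 0 (fst u) with
  | left _ => match Rle_dec 0 (snd u) with left _ => 0%Z | right _ => 3%Z end
  | right _ => match Rlt_dec 0 (snd u) with left _ => 1%Z | right _ =>
      match Rlt_dec (fst u) 0 with left _ => 2%Z | right _ => 3%Z end end
  end.

Lemma quadrant_range u : (0 <= quadrant u <= 3)%Z.
Proof. unfold quadrant; repeat destruct Rlt_dec; repeat destruct Rle_dec; lia. Qed.

Lemma quadrant_opp u v : u <> v -> ((quadrant (vsub v u) - quadrant (vsub u v) - 2) mod 4 = 0)%Z.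
Proof.
  destruct u as [a b], v as [c d]; intros Huv; unfold quadrant, vsub; simpl.
  have Hne : a - c <> 0 \/ b - d <> 0.
  { destruct (Req_dec (a - c) 0); destruct (Req_dec (b - d) 0); auto.
    exfalso; apply Huv; f_equal; lra. }
  repeat destruct Rlt_dec; repeat destruct Rle_dec; simpl; try reflexivity; exfalso; lra.
Qed.

Lemma quadrant_not_opposite u v :
  norm1 (vsub v u) < norm1 u -> ((quadrant v - quadrant u) mod 4 <> 2)%Z.
Proof.
  destruct u as [a b], v as [c d]; unfold norm1, quadrant, vsub; simpl; intros H.
  repeat destruct Rlt_dec; repeat destruct Rle_dec; simpl; try discriminate;
  revert H; unfold Rabs; repeat destruct Rcase_abs; lra.
Qed.

Lemma quadrant_stable u v u' v' m : m <= dist1 u v ->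
  dist1 u u' < m / 2 -> dist1 v v' < m / 2 ->
  ((quadrant (vsub u' v') - quadrant (vsub u v)) mod 4 <> 2)%Z.
Proof.
  intros Huv Hu Hv; apply quadrant_not_opposite.
  destruct u as [a b], v as [c d], u' as [a' b'], v' as [c' d'].
  revert Huv Hu Hv; unfold dist1, norm1, vsub; simpl.
  pose proof (Rabs_triang (a' - a) (c - c')); pose proof (Rabs_triang (b' - b) (d - d')).
  rewrite (Rabs_minus_sym a') (Rabs_minus_sym b') in H H0.
  replace (a' - c' - (a - c)) with (a' - a + (c - c')) by ring.
  replace (b' - d' - (b - d)) with (b' - b + (d - d')) by ring.
  lra.
Qed.

Section QuarterTurns.
Local Open Scope Z_scope.

Definition turn (a b : Z) : Z :=
  let d := (b - a) mod 4 in if Z.eq_dec d 3 then -1 else d.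

Lemma turn_mod a b : (turn a b - (b - a)) mod 4 = 0.
Proof. unfold turn; cbv zeta; destruct Z.eq_dec; cbn [is_left];
  Z.to_euclidean_division_equations; lia.
Qed.

Lemma turn_anti a b : (b - a) mod 4 <> 2 -> turn b a = - turn a b.
Proof. unfold turn; cbv zeta; intros; repeat destruct Z.eq_dec; cbn [is_left];
  Z.to_euclidean_division_equations; lia.
Qed.

Lemma turn_shift2 a b : turn ((a + 2) mod 4) ((b + 2) mod 4) = turn a b.
Proof.
  unfold turn; replace (((b + 2) mod 4 - (a + 2) mod 4) mod 4) with ((b - a) mod 4);
  [reflexivity|]; rewrite -Zminus_mod; f_equal; lia.
Qed.

Lemma turn_cycle4 a b c d :
  0 <= a <= 3 -> 0 <= b <= 3 -> 0 <= c <= 3 -> 0 <= d <= 3 ->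
  (b - a) mod 4 <> 2 -> (c - b) mod 4 <> 2 -> (d - c) mod 4 <> 2 ->
  (a - d) mod 4 <> 2 -> (c - a) mod 4 <> 2 -> (d - b) mod 4 <> 2 ->
  turn a b + turn b c + turn c d + turn d a = 0.
Proof.
  intros Ha Hb Hc Hd.
  have E x : 0 <= x <= 3 -> x = 0 \/ x = 1 \/ x = 2 \/ x = 3 by lia.
  case: (E a Ha) => [->|[->|[->|->]]]; case: (E b Hb) => [->|[->|[->|->]]];
  case: (E c Hc) => [->|[->|[->|->]]]; case: (E d Hd) => [->|[->|[->|->]]];
  intros; vm_compute in *; first [reflexivity | congruence].
Qed.

Fixpoint sumZ (f : nat -> Z) (n : nat) : Z :=
  match n with O => 0 | S n => sumZ f n + f n end.

Lemma eq_sumZ f g n : (forall k, (k < n)%N -> f k = g k) -> sumZ f n = sumZ g n.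
Proof. elim: n => //= n IH Hfg; rewrite IH ?Hfg // => k Hk; apply: Hfg; lia. Qed.

Lemma sumZB f g n : sumZ (fun k => f k - g k) n = sumZ f n - sumZ g n.
Proof. elim: n => //= n ->; lia. Qed.

Lemma sumZ_telescope a n : sumZ (fun k => a k - a k.+1) n = a O - a n.
Proof. elim: n => [|n IH] /=; [|rewrite IH]; lia. Qed.

Lemma sumZ_turn_mod a n : (sumZ (fun k => turn (a k) (a k.+1)) n - (a n - a O)) mod 4 = 0.
Proof.
  elim: n => [|n IH] /=; [|have := turn_mod (a n) (a n.+1)];
  Z.to_euclidean_division_equations; lia.
Qed.

(* A discrete Stokes theorem: if all cells have zero circulation, so has the boundary. *)
Lemma grid_turns (G : nat -> nat -> Z) N :
  (forall i j, (i < N)%N -> (j < N)%N ->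
    turn (G i j) (G i.+1 j) - turn (G i j.+1) (G i.+1 j.+1) =
    turn (G i j) (G i j.+1) - turn (G i.+1 j) (G i.+1 j.+1)) ->
  sumZ (fun i => turn (G i O) (G i.+1 O)) N - sumZ (fun i => turn (G i N) (G i.+1 N)) N =
  sumZ (fun j => turn (G O j) (G O j.+1)) N - sumZ (fun j => turn (G N j) (G N j.+1)) N.
Proof.
  move=> Hcell.
  pose row j := sumZ (fun i => turn (G i j) (G i.+1 j)) N.
  rewrite -[LHS]/(row O - row N) -sumZ_telescope -!sumZB.
  apply: eq_sumZ => j Hj; rewrite /row -sumZB.
  rewrite (@eq_sumZ _ (fun i => turn (G i j) (G i j.+1) - turn (G i.+1 j) (G i.+1 j.+1))).
  - exact: (sumZ_telescope (fun i => turn (G i j) (G i j.+1))).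
  - by move=> i Hi; apply: Hcell.
Qed.

End QuarterTurns.

Definition sample (N k : nat) : R := INR k / INR N.

Lemma sample_in N k : (0 < N)%N -> (k <= N)%N -> 0 <= sample N k <= 1.
Proof.
  move=> HN Hk; unfold sample.
  have N0 : 0 < INR N by apply: lt_0_INR; lia.
  have kN : INR k <= INR N by apply: le_INR; lia.
  split; [apply: Rmult_le_pos; [apply: pos_INR | left; apply: Rinv_0_lt_compat; lra]|].
  apply: (Rmult_le_reg_r (INR N)) => //; unfold Rdiv; rewrite Rmult_assoc Rinv_l; lra.
Qed.

Lemma sample0 N : sample N 0 = R0.
Proof. by rewrite /sample /= /Rdiv Rmult_0_l. Qed.

Lemma sampleN N : (0 < N)%N -> sample N N = R1.
Proof. move=> HN; rewrite /sample; field; apply: not_0_INR; lia. Qed.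

Lemma sample_step N k d : (0 < N)%N -> 1 < INR N * d -> Rabs (sample N k - sample N k.+1) < d.
Proof.
  move=> HN Hd; have N0 : 0 < INR N by apply: lt_0_INR; lia.
  rewrite /sample S_INR.
  replace (INR k / INR N - (INR k + 1) / INR N) with (- (1 / INR N)) by (field; lra).
  rewrite Rabs_Ropp Rabs_pos_eq; last by left; apply: Rdiv_lt_0_compat; lra.
  apply: (Rmult_lt_reg_r (INR N)) => //; unfold Rdiv; rewrite Rmult_assoc Rinv_l; lra.
Qed.

Definition winding (N : nat) (g : R -> R * R) (p : R * R) : Z :=
  sumZ (fun k => turn (quadrant (vsub (g (sample N k)) p))
                      (quadrant (vsub (g (sample N k.+1)) p))) N.

Lemma winding_mod N g p : (0 < N)%N ->
  ((winding N g p - (quadrant (vsub (g R1) p) - quadrant (vsub (g R0) p))) mod 4 = 0)%Z.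
Proof.
  move=> HN; have := sumZ_turn_mod (fun k => quadrant (vsub (g (sample N k)) p)) N.
  by rewrite /= sampleN // sample0.
Qed.

Definition eventually (P : nat -> Prop) : Prop := exists N0, forall N, (N0 <= N)%N -> P N.

Lemma eventually_forall (I : finType) (P : I -> nat -> Prop) :
  (forall i, eventually (P i)) -> eventually (fun N => forall i, P i N).
Proof.
  move=> HP; pose N0 i := proj1_sig (constructive_indefinite_description _ (HP i)).
  exists (\max_i N0 i)%N => N HN i.
  apply: (proj2_sig (constructive_indefinite_description _ (HP i))).
  exact: leq_trans (leq_bigmax i) HN.
Qed.

Section DisjointCurves.
Variables sg tau : R -> R * R.
Hypothesis sg_cont : curve_cont sg.
Hypothesis tau_cont : curve_cont tau.
Hypothesis sg_tau_disjoint : forall s t, 0 <= s <= 1 -> 0 <= t <= 1 -> sg s <> tau t.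

Lemma disjoint_curves_apart : exists m, 0 < m /\
  forall s t, 0 <= s <= 1 -> 0 <= t <= 1 -> m <= dist1 (sg s) (tau t).
Proof.
  have Hmin s : exists t, 0 <= t <= 1 /\
      forall t', 0 <= t' <= 1 -> dist1 (sg s) (tau t) <= dist1 (sg s) (tau t').
    exact: cont01_min (curve_dist1_cont (sg s) tau_cont).
  pose tm s := proj1_sig (constructive_indefinite_description _ (Hmin s)).
  have [tm_in tm_min] : (forall s, 0 <= tm s <= 1) /\ forall s t, 0 <= t <= 1 ->
      dist1 (sg s) (tau (tm s)) <= dist1 (sg s) (tau t).
    by split => s; case: (proj2_sig (constructive_indefinite_description _ (Hmin s))).
  pose h s := dist1 (sg s) (tau (tm s)).
  have h_cont : cont01 h.
  { case: sg_cont => S1 S2; apply: (cont01_dominated S1 S2) => x y _ _.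
    change (Rabs (h x - h y) <= dist1 (sg x) (sg y)).
    have := tm_min x (tm y) (tm_in y); have := tm_min y (tm x) (tm_in x).
    have := dist1_triangle (sg x) (sg y) (tau (tm y)).
    have := dist1_triangle (sg y) (sg x) (tau (tm x)).
    rewrite (dist1_sym (sg y) (sg x)) /h; intros; apply: Rabs_le; lra. }
  have [s0 [Hs0 h_min]] := cont01_min h_cont.
  exists (h s0); split.
  - case: (Rle_lt_or_eq_dec _ _ (dist1_ge0 (sg s0) (tau (tm s0)))) => // Heq.
    by case: (sg_tau_disjoint Hs0 (tm_in s0)); apply: dist1_eq0.
  - by move=> s t Hs Ht; apply: Rle_trans (h_min s Hs) (tm_min s t Ht).
Qed.

Definition grid_quadrant N i j := quadrant (vsub (sg (sample N i)) (tau (sample N j))).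

Lemma grid_quadrant_not_opposite : eventually (fun N => forall i j i' j',
  (i <= N)%N -> (j <= N)%N -> (i' <= N)%N -> (j' <= N)%N ->
  (i' <= i.+1)%N -> (i <= i'.+1)%N -> (j' <= j.+1)%N -> (j <= j'.+1)%N ->
  ((grid_quadrant N i' j' - grid_quadrant N i j) mod 4 <> 2)%Z).
Proof.
  have [m [Hm apart]] := disjoint_curves_apart.
  have [d1 [Hd1 U1]] := curve_unif sg_cont (eps := m / 2) ltac:(lra).
  have [d2 [Hd2 U2]] := curve_unif tau_cont (eps := m / 2) ltac:(lra).
  have Hd : 0 < Rmin d1 d2 by apply: Rmin_pos.
  have [N0 HN0] := INR_archimed (Rmin d1 d2) 1 Hd.
  exists N0.+1 => N HN i j i' j' Hi Hj Hi' Hj' Hii' Hi'i Hjj' Hj'j.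
  have N0N : (0 < N)%N by lia.
  have step : forall k k', (k <= N)%N -> (k' <= N)%N -> (k' <= k.+1)%N -> (k <= k'.+1)%N ->
      Rabs (sample N k - sample N k') < Rmin d1 d2.
  { move=> k k' _ _ Hkk' Hk'k.
    have HNd : 1 < INR N * Rmin d1 d2.
    { apply: Rlt_le_trans HN0 _; apply: Rmult_le_compat_r; [lra| apply: le_INR; lia]. }
    case: (ltngtP k k') => [Hlt|Hlt|<-]; last by rewrite Rminus_diag Rabs_R0.
    - have -> : k' = k.+1 by lia.
      exact: sample_step.
    - have -> : k = k'.+1 by lia.
      rewrite Rabs_minus_sym; exact: sample_step. }
  rewrite /grid_quadrant.
  apply: (quadrant_stable (apart _ _ (sample_in N0N Hi) (sample_in N0N Hj))).
  - apply: U1; try apply: sample_in => //.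
    exact: Rlt_le_trans (step i i' Hi Hi' Hii' Hi'i) (Rmin_l _ _).
  - apply: U2; try apply: sample_in => //.
    exact: Rlt_le_trans (step j j' Hj Hj' Hjj' Hj'j) (Rmin_r _ _).
Qed.

(* The quadrants of [sg (i / N) - tau (j / N)] form a grid whose bottom and top
   rows give the windings of [sg] around the ends of [tau], and whose left and
   right columns, after reversing the vector, give those of [tau]. *)
Lemma winding_swap : eventually (fun N =>
  (winding N sg (tau R0) - winding N sg (tau R1) =
   winding N tau (sg R0) - winding N tau (sg R1))%Z).
Proof.
  have [N0 HN0] := grid_quadrant_not_opposite.
  exists N0.+1 => N HN; have N0N : (0 < N)%N by lia.
  have far := HN0 N (ltnW HN).
  pose G := grid_quadrant N.
  have G_range k l : (0 <= G k l <= 3)%Z by apply: quadrant_range.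
  have cell i j : (i < N)%N -> (j < N)%N ->
      (turn (G i j) (G i.+1 j) - turn (G i j.+1) (G i.+1 j.+1) =
       turn (G i j) (G i j.+1) - turn (G i.+1 j) (G i.+1 j.+1))%Z.
  { move=> Hi Hj.
    have := turn_cycle4 (G_range i j) (G_range i.+1 j) (G_range i.+1 j.+1) (G_range i j.+1)
      ltac:(apply: far; lia) ltac:(apply: far; lia) ltac:(apply: far; lia)
      ltac:(apply: far; lia) ltac:(apply: far; lia) ltac:(apply: far; lia).
    rewrite (@turn_anti (G i j) (G i j.+1)) ?(@turn_anti (G i j.+1) (G i.+1 j.+1));
      try (apply: far; lia).
    lia. }
  have opp t u : 0 <= t <= 1 -> 0 <= u <= 1 ->
      quadrant (vsub (sg u) (tau t)) = ((quadrant (vsub (tau t) (sg u)) + 2) mod 4)%Z.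
  { move=> Ht Hu; have := quadrant_opp (fun E => sg_tau_disjoint Hu Ht (esym E)).
    have := quadrant_range (vsub (sg u) (tau t)); Z.to_euclidean_division_equations; lia. }
  have := grid_turns cell.
  rewrite /G /grid_quadrant /winding sample0 sampleN // => ->.
  by congr (_ - _)%Z; apply: eq_sumZ => k Hk;
    rewrite !opp ?turn_shift2 //; try (apply: sample_in; lia); lra.
Qed.

End DisjointCurves.

Definition clique (T : finType) (e : rel T) (S : {set T}) : Prop :=
  {in S &, forall x y, x != y -> e x y}.

Section K5Obstruction.
Local Open Scope nat_scope.

(* The van Kampen obstruction of K5, in integers: [P i j k] stands for the
   winding of the arc [ij] around the vertex [k] and [Q x y] for the quadrant
   of the vector from [y] to [x]. *)
Lemma K5_winding_contradiction (P : nat -> nat -> nat -> Z) (Q : nat -> nat -> Z) :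
  (forall i j k, [&& i < j, j < 5, k < 5, k != i & k != j] ->
     ((P i j k - (Q j k - Q i k)) mod 4 = 0)%Z) ->
  (forall x y, x < y < 5 -> ((Q x y - Q y x - 2) mod 4 = 0)%Z) ->
  (forall i j k l, [&& i < j, j < 5, k < l, l < 5 & [&& i != k, i != l, j != k & j != l]] ->
     (P i j k - P i j l = P k l i - P k l j)%Z) -> False.
Proof.
move=> HP HQ HS.
move: (HP 0 1 2 isT) (HP 0 1 3 isT) (HP 0 1 4 isT) (HP 0 2 1 isT) (HP 0 2 3 isT) (HP 0 2 4 isT)
      (HP 0 3 1 isT) (HP 0 3 2 isT) (HP 0 3 4 isT) (HP 0 4 1 isT) (HP 0 4 2 isT) (HP 0 4 3 isT)
      (HP 1 2 0 isT) (HP 1 2 3 isT) (HP 1 2 4 isT) (HP 1 3 0 isT) (HP 1 3 2 isT) (HP 1 3 4 isT)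
      (HP 1 4 0 isT) (HP 1 4 2 isT) (HP 1 4 3 isT) (HP 2 3 0 isT) (HP 2 3 1 isT) (HP 2 3 4 isT)
      (HP 2 4 0 isT) (HP 2 4 1 isT) (HP 2 4 3 isT) (HP 3 4 0 isT) (HP 3 4 1 isT) (HP 3 4 2 isT).
move: (HQ 0 1 isT) (HQ 0 2 isT) (HQ 0 3 isT) (HQ 0 4 isT) (HQ 1 2 isT)
      (HQ 1 3 isT) (HQ 1 4 isT) (HQ 2 3 isT) (HQ 2 4 isT) (HQ 3 4 isT).
move: (HS 0 1 2 3 isT) (HS 0 1 2 4 isT) (HS 0 1 3 4 isT) (HS 0 2 1 3 isT) (HS 0 2 1 4 isT)
      (HS 0 2 3 4 isT) (HS 0 3 1 2 isT) (HS 0 3 1 4 isT) (HS 0 3 2 4 isT) (HS 0 4 1 2 isT)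
      (HS 0 4 1 3 isT) (HS 0 4 2 3 isT) (HS 1 2 3 4 isT) (HS 1 3 2 4 isT) (HS 1 4 2 3 isT).
move=> *; Z.to_euclidean_division_equations; lia.
Qed.

End K5Obstruction.

Section Drawing.
Variables (T : finType) (e : rel T).
Variables (pos : T -> R * R) (arc : T -> T -> R -> R * R).
Hypothesis pos_inj : injective pos.
Hypothesis arc_cont : forall x y, e x y -> curve_cont (arc x y).
Hypothesis arc0 : forall x y, e x y -> arc x y R0 = pos x.
Hypothesis arc1 : forall x y, e x y -> arc x y R1 = pos y.
Hypothesis arc_avoids_vertices : forall x y t z, e x y -> 0 < t < 1 -> arc x y t <> pos z.
Hypothesis arcs_cross_free : forall x y x' y', e x y -> e x' y' -> [set x; y] != [set x'; y'] ->
  forall s t, 0 < s < 1 -> 0 < t < 1 -> arc x y s <> arc x' y' t.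

Lemma arcs_disjoint x y x' y' : e x y -> e x' y' ->
  [&& x != x', x != y', y != x' & y != y'] ->
  forall s t, 0 <= s <= 1 -> 0 <= t <= 1 -> arc x y s <> arc x' y' t.
Proof.
  move=> E E' /and4P [xx' xy' yx' yy'] s t Hs Ht.
  have ends u : 0 <= u <= 1 -> u = R0 \/ u = R1 \/ 0 < u < 1 by lra.
  case: (ends s Hs) => [->|[->|Is]]; case: (ends t Ht) => [->|[->|It]];
    rewrite ?arc0 ?arc1 //;
    try (by move/pos_inj/eqP; apply/negP);
    try (by move/esym; apply: arc_avoids_vertices);
    try (by apply: arc_avoids_vertices).
  apply: arcs_cross_free => //; apply/negP => /eqP Exy.
  have : x \in [set x'; y'] by rewrite -Exy set21.
  by rewrite in_set2 (negbTE xx') (negbTE xy').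
Qed.

Lemma winding_swap_uniform : eventually (fun N => forall x y x' y',
  e x y -> e x' y' -> [&& x != x', x != y', y != x' & y != y'] ->
  (winding N (arc x y) (pos x') - winding N (arc x y) (pos y') =
   winding N (arc x' y') (pos x) - winding N (arc x' y') (pos y))%Z).
Proof.
  have swap (q : T * T * T * T) : eventually (fun N => let: (x, y, x', y') := q in
      e x y -> e x' y' -> [&& x != x', x != y', y != x' & y != y'] ->
      (winding N (arc x y) (pos x') - winding N (arc x y) (pos y') =
       winding N (arc x' y') (pos x) - winding N (arc x' y') (pos y))%Z).
  { case: q => [[[x y] x'] y'].
    have [/and3P [E E' D]|] := boolP [&& e x y, e x' y' & [&& x != x', x != y', y != x' & y != y']].
    - have [N0 HN0] := winding_swap (arc_cont E) (arc_cont E') (arcs_disjoint E E' D).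
      by exists N0 => N /HN0; rewrite (arc0 E) (arc1 E) (arc0 E') (arc1 E').
    - by move=> nE; exists 0%N => N _ E E' D; case/and3P: nE. }
  have [N0 HN0] := eventually_forall swap.
  by exists N0 => N /HN0 HN x y x' y'; apply: (HN (x, y, x', y')).
Qed.

Lemma drawing_K5_free (S : {set T}) : #|S| = 5%N -> ~ clique e S.
Proof.
  move=> S5 HS; have [x0 _] : exists x0, x0 \in S by apply/card_gt0P; rewrite S5.
  pose v k := nth x0 (enum S) k.
  have size_enum : size (enum S) = 5%N by rewrite -cardE.
  have v_neq i j : (i < 5)%N -> (j < 5)%N -> i != j -> v i != v j.
    by move=> Hi Hj; rewrite /v nth_uniq ?size_enum ?enum_uniq.
  have adj i j : (i < 5)%N -> (j < 5)%N -> i != j -> e (v i) (v j).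
    by move=> Hi Hj Hij; apply: HS (v_neq _ _ Hi Hj Hij); rewrite -mem_enum mem_nth ?size_enum.
  have [N0 swap] := winding_swap_uniform; pose N := N0.+1.
  apply: (@K5_winding_contradiction (fun i j k => winding N (arc (v i) (v j)) (pos (v k)))
            (fun x y => quadrant (vsub (pos (v x)) (pos (v y))))).
  - move=> i j k /and5P [ij j5 k5 _ _]; have Eij : e (v i) (v j) by apply: adj; lia.
    by have := winding_mod (arc (v i) (v j)) (pos (v k)) (ltn0Sn N0); rewrite arc0 ?arc1.
  - move=> x y /andP [xy y5]; apply: quadrant_opp => /pos_inj /eqP.
    by apply/negP; apply: v_neq; lia.
  - move=> i j k l /and5P [ij j5 kl l5 /and4P [ik il jk jl]].
    by apply: (swap N (leqnSn N0)); rewrite ?adj ?v_neq //; lia.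
Qed.

End Drawing.

Local Close Scope R_scope.

Lemma planar_K5_free (T : finType) (e : rel T) (S : {set T}) :
  planar e -> #|S| = 5 -> ~ clique e S.
Proof.
  case=> pos [arc [pos_inj [Harc arcs_cross_free]]].
  apply: (drawing_K5_free pos_inj _ _ _ _ arcs_cross_free) => x y.
  - by case/Harc.
  - by case/Harc => _ [].
  - by case/Harc => _ [_ []].
  - by move=> t z /Harc [_ [_ [_ [_ Hv]]]] /Hv.
Qed.

Lemma uniq6 (T : eqType) (x1 x2 x3 x4 x5 x6 : T) :
  x1 != x2 -> x1 != x3 -> x1 != x4 -> x1 != x5 -> x1 != x6 ->
  x2 != x3 -> x2 != x4 -> x2 != x5 -> x2 != x6 ->
  x3 != x4 -> x3 != x5 -> x3 != x6 -> x4 != x5 -> x4 != x6 -> x5 != x6 ->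
  uniq [:: x1; x2; x3; x4; x5; x6].
Proof. by move=> *; rewrite /= !inE !negb_or; repeat (apply/andP; split). Qed.

Lemma leq_cardsD1 (T : finType) (A : {set T}) x : #|A| <= #|A :\ x|.+1.
Proof. by rewrite (cardsD1 x A); case: (x \in A). Qed.

Lemma sum_nat_bool (T : finType) (A : {set T}) (P : pred T) :
  \sum_(x in A) (P x : nat) = #|[set x in A | P x]|.
Proof. by rewrite -sum1dep_card big_mkcondr /=; apply: eq_bigr => x _; case: (P x). Qed.

Section SimpleGraph.
Variables (T : finType) (e : rel T).
Hypothesis e_sym : symmetric e.
Hypothesis e_irr : irreflexive e.
Hypothesis no_S22 : ~ has_S22 e.

Definition edges_in (S : {set T}) := [set p in edge_set e | p \subset S].
Definition nbhd (S : {set T}) x := [set y in S | e x y].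

Lemma edge_set_pair p : p \in edge_set e -> exists x y, e x y /\ p = [set x; y].
Proof. by case/imset2P => x y _; rewrite inE => Exy ->; exists x, y. Qed.

Lemma adj_neq x y : e x y -> x != y.
Proof. by apply: contraTneq => ->; rewrite e_irr. Qed.

Lemma nbhd_subD1 S v : nbhd S v \subset S :\ v.
Proof.
  apply/subsetP => y; rewrite !inE => /andP [yS Evy].
  by rewrite yS andbT eq_sym adj_neq.
Qed.

Lemma edges_inD1 S v : #|edges_in S| <= #|edges_in (S :\ v)| + #|nbhd S v|.
Proof.
  have sub : edges_in S \subset edges_in (S :\ v) :|: [set [set v; y] | y in nbhd S v].
  { apply/subsetP => p; rewrite !inE => /andP [pE pS].
    have [x [y [Exy Hp]]] := edge_set_pair pE; subst p.
    have xS : x \in S by apply: (subsetP pS); rewrite !inE eqxx.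
    have yS : y \in S by apply: (subsetP pS); rewrite !inE eqxx orbT.
    case: (eqVneq x v) => [<-|xv].
      by apply/orP; right; apply/imsetP; exists y; rewrite // inE yS.
    case: (eqVneq y v) => [<-|yv].
      by apply/orP; right; apply/imsetP; exists x; rewrite 1?setUC // inE xS e_sym.
    apply/orP; left; rewrite pE; apply/subsetP => z.
    by rewrite !inE => /orP [] /eqP ->; rewrite ?xv ?yv. }
  apply: leq_trans (subset_leq_card sub) _; apply: leq_trans (leq_card_setU _ _) _.
  by rewrite leq_add2l leq_imset_card.
Qed.

Lemma edges_in_max S : (#|edges_in S|).*2 <= #|S| * (#|S| - 1).
Proof.
  move: {2}#|S| (erefl #|S|) => n; elim: n S => [|n IH] S HS.
  - move/eqP: HS; rewrite cards_eq0 => /eqP ->.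
    rewrite cards0 mul0n leqn0 double_eq0 cards_eq0; apply/eqP/setP => p; rewrite !inE.
    apply/negP => /andP [/edge_set_pair [x [y [_ ->]]] /subsetP/(_ x)].
    by rewrite !inE eqxx => /(_ isT).
  - have [v vS] : exists v, v \in S by apply/card_gt0P; rewrite HS.
    have HSv : #|S :\ v| = n by move: (cardsD1 v S); rewrite vS HS add1n => -[].
    have := IH _ HSv; have := edges_inD1 S v.
    have : #|nbhd S v| <= n by rewrite -HSv subset_leq_card ?nbhd_subD1.
    rewrite -!muln2; nia.
Qed.

Lemma handshake S : (#|edges_in S|).*2 <= \sum_(x in S) #|nbhd S x|.
Proof.
  have two p : p \in edges_in S -> \sum_(x in S) (x \in p) = 2.
  { rewrite inE sum_nat_bool => /andP [pE pS].
    have -> : [set x in S | x \in p] = p.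
      by apply/setP => z; rewrite inE andb_idl // => /(subsetP pS).
    by have [x [y [Exy ->]]] := edge_set_pair pE; rewrite cards2 adj_neq. }
  rewrite -muln2 -sum_nat_const -(eq_bigr _ two) exchange_big /=.
  apply: leq_sum => x xS; rewrite sum_nat_bool.
  apply: leq_trans (leq_imset_card (fun y => [set x; y]) (nbhd S x)).
  apply/subset_leq_card/subsetP => p; rewrite !inE => /andP [/andP [pE pS] xp].
  have [a [b [Eab Hp]]] := edge_set_pair pE; subst p.
  have aS : a \in S by apply: (subsetP pS); rewrite !inE eqxx.
  have bS : b \in S by apply: (subsetP pS); rewrite !inE eqxx orbT.
  move: xp; rewrite !inE => /orP [] /eqP ->; apply/imsetP.
  - by exists b; rewrite // inE bS Eab.
  - by exists a; rewrite 1?setUC // inE aS e_sym Eab.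
Qed.

Lemma edges_in_deg (S : {set T}) w : w \in S ->
  (#|edges_in S|).*2 <= #|S|.-1 * #|S|.-2 + (#|nbhd S w|).*2.
Proof.
  move=> wS; have := edges_in_max (S :\ w); have := edges_inD1 S w.
  have := cardsD1 w S; rewrite wS -!muln2; nia.
Qed.

Lemma card_nbhd_nonadj (S : {set T}) w (Y : {set T}) : Y \subset S :\ w ->
  {in Y, forall y, ~~ e w y} -> #|nbhd S w| + #|Y| <= #|S :\ w|.
Proof.
  move=> YS nadj; rewrite -(cardsID Y (S :\ w)) (setIidPr YS) [#|Y| + _]addnC leq_add2r.
  apply/subset_leq_card/subsetP => y yN.
  rewrite in_setD (subsetP (nbhd_subD1 S w) y yN) andbT.
  by apply: contraTN yN => yY; rewrite inE (negbTE (nadj y yY)) andbF.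
Qed.

Lemma edges_in_five_nonadj (S : {set T}) w (Y : {set T}) : #|S| = 5 -> w \in S ->
  Y \subset S :\ w -> {in Y, forall y, ~~ e w y} -> #|edges_in S| + #|Y| <= 10.
Proof.
  move=> S5 wS YS nadj; have := edges_in_deg wS; have := card_nbhd_nonadj YS nadj.
  by have := cardsD1 w S; rewrite wS S5 -!muln2; lia.
Qed.

Lemma edges_in_five (S : {set T}) : #|S| = 5 -> ~ clique e S -> #|edges_in S| <= 9.
Proof.
  move=> S5 notK.
  have : ~~ [forall w in S, forall y in S, (w != y) ==> e w y].
    apply/negP => /forall_inP H; apply: notK => w y wS yS wy.
    exact: implyP (forall_inP (H w wS) y yS) wy.
  rewrite negb_forall_in => /exists_inP [w wS]; rewrite negb_forall_in => /exists_inP [y yS].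
  rewrite negb_imply => /andP [wy nwy].
  have nadj : {in [set y], forall z, ~~ e w z} by move=> z /set1P ->.
  have yw : [set y] \subset S :\ w by rewrite sub1set !inE eq_sym wy.
  by have := edges_in_five_nonadj S5 wS yw nadj; rewrite cards1; lia.
Qed.

Lemma dense_five_adj (S : {set T}) w y1 y2 : #|S| = 5 -> 8 < #|edges_in S| ->
  w \in S -> y1 \in S -> y2 \in S -> y1 != y2 -> y1 != w -> y2 != w -> e w y1 || e w y2.
Proof.
  move=> S5 e9 wS y1S y2S y12 y1w y2w; apply/negPn/negP; rewrite negb_or => /andP [n1 n2].
  have Y : [set y1; y2] \subset S :\ w by rewrite subUset !sub1set !in_setD1 y1w y2w y1S y2S.
  have nadj : {in [set y1; y2], forall y, ~~ e w y} by move=> y /set2P [] ->.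
  by have := edges_in_five_nonadj S5 wS Y nadj; rewrite cards2 y12; lia.
Qed.

Lemma S22_contra x y a b c d : e x y -> e x a -> e x b -> e y c -> e y d ->
  uniq [:: x; y; a; b; c; d] -> False.
Proof. by move=> *; apply: no_S22; exists x, y, a, b, c, d. Qed.

Ltac distinct := apply: uniq6; first [done | by rewrite eq_sym | by apply: adj_neq |
                                       by rewrite eq_sym; apply: adj_neq].

Lemma nbr_of_deg5 S x y : 4 < #|nbhd S x| -> y \in nbhd S x -> #|nbhd S y| <= 2.
Proof.
  move=> degx yN; rewrite leqNgt; apply/negP => degy.
  move: (yN); rewrite inE => /andP [yS Exy].
  have : 1 < #|nbhd S y :\ x| by have := leq_cardsD1 (nbhd S y) x; lia.
  case/card_gt1P => c [d [cN dN cd]].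
  move: cN dN; rewrite !inE => /and3P [cx cS Eyc] /and3P [dx dS Eyd].
  have : 1 < #|nbhd S x :\ y :\ c :\ d|.
    have := leq_cardsD1 (nbhd S x) y; have := leq_cardsD1 (nbhd S x :\ y) c.
    have := leq_cardsD1 (nbhd S x :\ y :\ c) d; lia.
  case/card_gt1P => a [b [aN bN ab]].
  move: aN bN; rewrite !inE => /and5P [ad ac ay aS Exa] /and5P [bd bc b_y bS Exb].
  by apply: (S22_contra Exy Exa Exb Eyc Eyd); distinct.
Qed.

Lemma deg4_nbhd_closed S x y : #|nbhd S x| = 4 -> y \in nbhd S x -> 2 < #|nbhd S y| ->
  nbhd S y \subset x |: nbhd S x.
Proof.
  move=> degx yN degy; apply/subsetP => z zN; apply/negPn/negP => zC.
  move: yN zN; rewrite !inE => /andP [yS Exy] /andP [zS Eyz].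
  move: zC; rewrite !inE zS /= negb_or => /andP [zx Exz].
  have : 0 < #|nbhd S y :\ x :\ z|.
    by have := leq_cardsD1 (nbhd S y) x; have := leq_cardsD1 (nbhd S y :\ x) z; lia.
  case/card_gt0P => w; rewrite !inE => /and4P [wz wx wS Eyw].
  have : 1 < #|nbhd S x :\ y :\ w|.
    by have := leq_cardsD1 (nbhd S x) y; have := leq_cardsD1 (nbhd S x :\ y) w; lia.
  case/card_gt1P => a [b [aN bN ab]].
  move: aN bN; rewrite !inE => /and4P [aw ay aS Exa] /and4P [bw b_y bS Exb].
  have az : a != z by apply: contraNneq Exz => <-.
  have bz : b != z by apply: contraNneq Exz => <-.
  by apply: (S22_contra Exy Exa Exb Eyz Eyw); distinct.
Qed.

(* For a neighbour [z] of [a] in [S], the edge [az] is the spine of an S_{2,2}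
   with leaf [v] at [a]: if [z] misses one of the three remaining vertices,
   density gives the other two to [z] and the missed one to [a]. *)
Lemma dense_five_no_pendant (S : {set T}) v a : #|S| = 5 -> 8 < #|edges_in S| ->
  v \notin S -> a \in S -> e v a -> False.
Proof.
  move=> S5 e9 vS aS Eva.
  have near := dense_five_adj S5 e9.
  have : 0 < #|nbhd S a| by have := edges_in_deg aS; rewrite S5 -!muln2; lia.
  case/card_gt0P => z; rewrite inE => /andP [zS Eaz].
  have : 2 < #|S :\ a :\ z|.
    by have := leq_cardsD1 S a; have := leq_cardsD1 (S :\ a) z; rewrite S5; lia.
  case/card_gt2P => t1 [t2 [t3 [[t1R t2R t3R] [t12 t23 t31]]]].
  have inR t : t \in S :\ a :\ z -> [/\ t != z, t != a, t != v & t \in S].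
    by rewrite !inE => /and3P [-> -> tS]; rewrite tS; split=> //; apply: contraNneq vS => <-.
  have av : a != v by apply: contraNneq vS => <-.
  have zv : z != v by apply: contraNneq vS => <-.
  have build t c d : t \in S :\ a :\ z -> c \in S :\ a :\ z -> d \in S :\ a :\ z ->
      t != c -> t != d -> c != d -> e a t -> e z c -> e z d -> False.
  { move=> /inR [tz ta tv _] /inR [cz ca cv _] /inR [dz da dv _] tc td cd Eat Ezc Ezd.
    have Eav : e a v by rewrite e_sym.
    by apply: (S22_contra Eaz Eav Eat Ezc Ezd); distinct. }
  have miss t c d : t \in S :\ a :\ z -> c \in S :\ a :\ z -> d \in S :\ a :\ z ->
      t != c -> t != d -> c != d -> ~~ e z t -> False.
  { move=> tR cR dR tc td cd nzt.
    have [tz ta _ tS] := inR t tR; have [cz ca _ cS] := inR c cR; have [dz da _ dS] := inR d dR.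
    have Ezc : e z c by move: (near z t c zS tS cS tc tz cz); rewrite (negbTE nzt).
    have Ezd : e z d by move: (near z t d zS tS dS td tz dz); rewrite (negbTE nzt).
    have Eat : e a t.
      have := near t a z tS aS zS (adj_neq Eaz) ltac:(by rewrite eq_sym) ltac:(by rewrite eq_sym).
      by rewrite [e t z]e_sym (negbTE nzt) orbF e_sym.
    exact: build tR cR dR tc td cd Eat Ezc Ezd. }
  have [[_ t1a _ t1S] [_ t2a _ t2S]] := (inR _ t1R, inR _ t2R).
  have t13 : t1 != t3 by rewrite eq_sym.
  have [zt1|] := boolP (e z t1); last exact: miss t1R t2R t3R t12 t13 t23.
  have [zt2|] := boolP (e z t2); last by apply: miss t2R t1R t3R _ t23 t13; rewrite eq_sym.
  have [zt3|] := boolP (e z t3); last by apply: miss t3R t1R t2R t31 _ t12; rewrite eq_sym.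
  case/orP: (near a t1 t2 aS t1S t2S t12 t1a t2a) => [at1|at2].
  - exact: build t1R t2R t3R t12 t13 t23 at1 zt2 zt3.
  - by apply: build t2R t1R t3R _ t23 t13 at2 zt1 zt3; rewrite eq_sym.
Qed.

Hypothesis K5_free : forall S : {set T}, #|S| = 5 -> ~ clique e S.

(* The allowance on five vertices is for K5 minus an edge, with 9 = 2 * 5 - 1 edges. *)
Definition edge_bound (S : {set T}) := 2 + #|edges_in S| <= 2 * #|S| + (#|S| == 5).

Lemma edge_bound_small (S : {set T}) : 0 < #|S| <= 5 -> edge_bound S.
Proof.
  case/andP => S0 S5; rewrite /edge_bound.
  have [HS|HS] := eqVneq #|S| 5; first by have := edges_in_five HS (K5_free HS); rewrite HS /=; lia.
  by have := edges_in_max S; rewrite -muln2; nia.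
Qed.

Lemma edge_bound_low_deg (S : {set T}) v : 5 < #|S| -> v \in S -> #|nbhd S v| <= 2 ->
  edge_bound (S :\ v) -> edge_bound S.
Proof.
  move=> S6 vS degv; rewrite /edge_bound (gtn_eqF S6).
  have HSv : #|S :\ v| = #|S|.-1 by have := cardsD1 v S; rewrite vS; lia.
  have := edges_inD1 S v; rewrite HSv.
  have [S6'|S6'] := eqVneq #|S| 6; last by rewrite -(eqn_add2r 1) !addn1 prednK; lia.
  rewrite S6' /=; have [->|] := posnP #|nbhd S v|; first lia.
  case/card_gt0P => a; rewrite inE => /andP [aS Eva].
  have aSv : a \in S :\ v by rewrite in_setD1 aS eq_sym adj_neq.
  have Sv5 : #|S :\ v| = 5 by rewrite HSv S6'.
  have : #|edges_in (S :\ v)| <= 8.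
    rewrite leqNgt; apply/negP => e9.
    by apply: dense_five_no_pendant Sv5 e9 _ aSv Eva; rewrite !inE eqxx.
  move=> e8 eS _; rewrite -[X in _ <= X]/(2 + 10) leq_add2l.
  exact: leq_trans eS (leq_add e8 degv).
Qed.

Lemma card_setU1_nbhd (S : {set T}) x : #|x |: nbhd S x| = #|nbhd S x|.+1.
Proof. by rewrite cardsU1 inE e_irr andbF. Qed.

Lemma setU1_nbhd_sub (S : {set T}) x : x \in S -> x |: nbhd S x \subset S.
Proof. by move=> xS; apply/subsetP => z; rewrite !inE => /orP [/eqP -> | /andP []]. Qed.

Lemma edges_in_closed (S C : {set T}) :
  (forall c z, c \in C -> z \in S -> e c z -> z \in C) ->
  #|edges_in S| <= #|edges_in C| + #|edges_in (S :\: C)|.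
Proof.
  move=> closed; apply: leq_trans (leq_card_setU _ _); apply/subset_leq_card/subsetP => p.
  rewrite !inE => /andP [pE pS].
  have [a [b [Eab Hp]]] := edge_set_pair pE; subst p.
  have aS : a \in S by apply: (subsetP pS); rewrite !inE eqxx.
  have bS : b \in S by apply: (subsetP pS); rewrite !inE eqxx orbT.
  rewrite pE /=; have [aC|aC] := boolP (a \in C).
  - apply/orP; left; apply/subsetP => z.
    by rewrite in_set2 => /orP [] /eqP ->; last exact: closed aC bS Eab.
  - have bC : b \notin C by apply: contra aC => bC; apply: closed bC aS _; rewrite e_sym.
    apply/orP; right; apply/subsetP => z.
    by rewrite in_set2 => /orP [] /eqP ->; rewrite in_setD ?aC ?bC.
Qed.

Lemma edge_bound_deg4 (S : {set T}) x : 5 < #|S| -> x \in S -> #|nbhd S x| = 4 ->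
  {in S, forall y, 2 < #|nbhd S y|} -> edge_bound (S :\: (x |: nbhd S x)) -> edge_bound S.
Proof.
  move=> S6 xS degx deg3; set C := x |: nbhd S x.
  have C5 : #|C| = 5 by rewrite card_setU1_nbhd degx.
  have closed c z : c \in C -> z \in S -> e c z -> z \in C.
  { move=> cC zS; case/setU1P: cC => [-> Exz|cN Ecz]; first by rewrite !inE zS Exz orbT.
    have cS : c \in S by move: cN; rewrite inE => /andP [].
    by apply: (subsetP (deg4_nbhd_closed degx cN (deg3 c cS))); rewrite inE zS Ecz. }
  have SC : #|S :\: C| = #|S| - 5 by rewrite cardsD (setIidPr (setU1_nbhd_sub xS)) C5.
  rewrite /edge_bound SC (gtn_eqF S6) => IH.
  have := edges_in_closed closed.
  have := edges_in_five C5 (K5_free C5); have := leq_b1 (#|S| - 5 == 5).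
  lia.
Qed.

Lemma edge_bound_cubic (S : {set T}) : 5 < #|S| ->
  {in S, forall x, #|nbhd S x| = 3} -> edge_bound S.
Proof.
  move=> S6 deg3; have := handshake S; rewrite (eq_bigr _ deg3) sum_nat_const -muln2.
  by rewrite /edge_bound (gtn_eqF S6); lia.
Qed.

Lemma edge_boundP (S : {set T}) : 0 < #|S| -> edge_bound S.
Proof.
  move: {2}#|S| (erefl #|S|) => n; elim/ltn_ind: n S => n IH S HS S0.
  have [S5|S6] := leqP #|S| 5; first by apply: edge_bound_small; rewrite S0 S5.
  case: (boolP [exists v in S, #|nbhd S v| <= 2]) => [/exists_inP [v vS degv]|].
    apply: (edge_bound_low_deg S6 vS degv); apply: (IH #|S :\ v|) => //;
    by have := cardsD1 v S; rewrite vS; lia.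
  rewrite negb_exists_in => /forall_inP low.
  have deg3 y : y \in S -> 2 < #|nbhd S y| by move=> /low; rewrite -ltnNge.
  have deg_le4 y : y \in S -> #|nbhd S y| <= 4.
    move=> yS; rewrite leqNgt; apply/negP => degy.
    have [z zN] : exists z, z \in nbhd S y by apply/card_gt0P; lia.
    have zS : z \in S by move: zN; rewrite inE => /andP [].
    by have := nbr_of_deg5 degy zN; have := deg3 z zS; lia.
  case: (boolP [exists x in S, #|nbhd S x| == 4]) => [/exists_inP [x xS /eqP degx]|].
    have SC : #|S :\: (x |: nbhd S x)| = #|S| - 5.
      by rewrite cardsD (setIidPr (setU1_nbhd_sub xS)) card_setU1_nbhd degx.
    by apply: (edge_bound_deg4 S6 xS degx deg3); apply: (IH (#|S| - 5)) => //; lia.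
  rewrite negb_exists_in => /forall_inP deg_ne4.
  apply: (edge_bound_cubic S6) => x xS.
  by have := deg3 x xS; have := deg_le4 x xS; have := deg_ne4 x xS; lia.
Qed.

End SimpleGraph.

Theorem lemma2p1 (T : finType) (e : rel T) :
  simple_graph e ->
  1 <= #|T| -> #|T| != 5 ->
  planar e ->
  ~ has_S22 e ->
  num_edges e <= 2 * #|T| - 2.
Proof.
  move=> [e_sym e_irr] T1 T5 e_planar no_S22.
  have := edge_boundP e_sym e_irr no_S22 (fun S => planar_K5_free e_planar) (S := [set: T]).
  rewrite /edge_bound cardsT (negbTE T5) /num_edges.
  have -> : edges_in e [set: T] = edge_set e by apply/setP => p; rewrite !inE subsetT andbT.
  lia.
Qed.
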